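(* Let $\bm H$ be a finite-dimensional Hilbert space, let $\rho_{\rm i}=\sum_a p_{\rm i}(a)|\psi_a\rangle\langle\psi_a|$ and $\rho_0=\sum_b p_0(b)|\phi_b\rangle\langle\phi_b|$ be density operators with orthonormal eigenbases $\{|\psi_a\rangle\}$, $\{|\phi_b\rangle\}$. Let $H(t)$, $0\le t\le\tau$, be a (continuous) family of Hermitian operators on $\bm H$, $U:=\mathrm{T}\exp(-\mathrm{i}\int_0^\tau H(t)\,dt)$ the time-ordered exponential, and $\rho_{\rm f}:=U\rho_{\rm i}U^\dagger$. Let $\Theta$ be an anti-unitary operator on $\bm H$ with $\Theta^2=I$, set $\tilde H(t):=\Theta H(t)\Theta$, $\tilde U:=\mathrm{T}\exp(-\mathrm{i}\int_0^\tau\tilde H(\tau-t)\,dt)$, $|\tilde\psi_a\rangle:=\Theta|\psi_a\rangle$, $|\tilde\phi_b\rangle:=\Theta|\phi_b\rangle$. Define the forward and backward joint probabilities $$p(a,b):=|\langle\phi_b|U|\psi_a\rangle|^2\,p_{\rm i}(a),\qquad \tilde p(b,a):=|\langle\tilde\psi_a|\tilde U|\tilde\phi_b\rangle|^2\,p_0(b).$$ Then $$\sum_{a,b}p(a,b)\ln\frac{p(a,b)}{\tilde p(b,a)}=S(\rho_{\rm f}\|\rho_0).$$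
   Context: An anti-unitary operator is an anti-linear map preserving inner products up to complex conjugation. Conventions: $0\ln(0/x)=0$ and $x\ln(x/0)=+\infty$ for $x>0$. The quantum relative entropy is $S(\rho\|\sigma):=\mathrm{tr}[\rho\ln\rho]-\mathrm{tr}[\rho\ln\sigma]$, defined as $+\infty$ if there is $|\psi\rangle$ with $\sigma|\psi\rangle=0$ and $\langle\psi|\rho|\psi\rangle\ne0$. *)

From HB Require Import structures.
From mathcomp Require Import all_boot all_order all_algebra.
From mathcomp Require Import complex.
From mathcomp Require Import all_classical all_reals.
From mathcomp Require Import ereal topology normedtype derive exp.
Set Implicit Arguments. Unset Strict Implicit. Unset Printing Implicit Defensive.
Import Order.TTheory GRing.Theory Num.Theory.
Import numFieldNormedType.Exports.
Local Open Scope ring_scope.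
Local Open Scope complex_scope.
Local Open Scope classical_set_scope.
Local Open Scope ring_scope.

Section QDefs.
Variable R : realType.
Local Notation C := R[i].

Definition qadj {m k} (A : 'M[C]_(m, k)) : 'M[C]_(k, m) := (map_mx (@Num.conj _) A)^T.

Definition qinner {n} (x y : 'cV[C]_n) : C := (qadj x *m y) 0 0.

Definition qabs2 (z : C) : R := complex.Re z ^+ 2 + complex.Im z ^+ 2.

Definition qorthonormal {n} (v : 'I_n -> 'cV[C]_n) :=
  forall a b, qinner (v a) (v b) = (a == b)%:R.

Definition qprob_vec {n} (p : 'I_n -> R) :=
  (forall a, 0 <= p a) /\ \sum_a p a = 1.

Definition qdens {n} (p : 'I_n -> R) (v : 'I_n -> 'cV[C]_n) : 'M[C]_n :=
  \sum_a (p a)%:C *: (v a *m qadj (v a)).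

Definition qhermitian {n} (A : 'M[C]_n) := qadj A = A.

Definition qantiunitary {n} (T : 'cV[C]_n -> 'cV[C]_n) :=
  [/\ forall x y, T (x + y) = T x + T y,
      forall (c : C) x, T (c *: x) = Num.conj c *: T x
    & forall x y, qinner (T x) (T y) = Num.conj (qinner x y)].

(* matrix of the (linear) operator x |-> T (A (T x)) *)
Definition qsandwich {n} (T : 'cV[C]_n -> 'cV[C]_n) (A : 'M[C]_n) : 'M[C]_n :=
  \matrix_(i, j) (T (A *m T (delta_mx j 0))) i 0.

Definition qmx_cont_on {n} (tau : R) (G : R -> 'M[C]_n) :=
  forall i j,
    {within `[0, tau], continuous (fun t => complex.Re (G t i j))} /\
    {within `[0, tau], continuous (fun t => complex.Im (G t i j))}.

(* time-ordered exponential: U = V(tau) where V solves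
   V'(t) = -i G(t) V(t) on (0,tau), V continuous on [0,tau], V(0) = 1 *)
Definition qis_texp {n} (G : R -> 'M[C]_n) (tau : R) (U : 'M[C]_n) :=
  exists V : R -> 'M[C]_n,
    [/\ V 0 = 1%:M, V tau = U, qmx_cont_on tau V
      & forall t, 0 < t < tau -> forall i j,
          let D := (- 'i) *: (G t *m V t) in
          is_derive t 1 (fun s => complex.Re (V s i j)) (complex.Re (D i j)) /\
          is_derive t 1 (fun s => complex.Im (V s i j)) (complex.Im (D i j))].

(* logarithm with ln 0 := 0 (used on the support only) *)
Definition qlnz (x : R) : R := if 0 < x then ln x else 0.

(* matrix logarithm by functional calculus through the spectral
   decomposition A = M^* diag(lambda) M (M unitary) of a Hermitian A,
   acting as ln on the support and as 0 on the kernel *)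
Definition qmxlog {n} (A : 'M[C]_n) : 'M[C]_n :=
  qadj (spectralmx A) *m
      diag_mx (map_mx (fun z : C => (qlnz (complex.Re z))%:C) (spectral_diag A))
      *m spectralmx A.

Definition qrelent {n} (rho sigma : 'M[C]_n) : \bar R :=
  if `[< exists psi : 'cV[C]_n, sigma *m psi = 0 /\ qinner psi (rho *m psi) != 0 >]
  then +oo%E
  else (complex.Re (\tr (rho *m qmxlog rho)) - complex.Re (\tr (rho *m qmxlog sigma)))%:E.

Definition qklterm (x y : R) : \bar R :=
  if x == 0 then 0%E else if y == 0 then +oo%E else (x * ln (x / y))%:E.

End QDefs.

From HB Require Import structures.
From mathcomp Require Import all_boot all_order all_algebra.
From mathcomp Require Import complex.
From mathcomp Require Import all_classical all_reals.
From mathcomp Require Import ereal topology normedtype derive realfun exp.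
From mathcomp Require Import ring.
Import Order.TTheory GRing.Theory Num.Theory.
Local Open Scope ring_scope.
Local Open Scope complex_scope.
Local Open Scope classical_set_scope.
Set Implicit Arguments. Unset Strict Implicit. Unset Printing Implicit Defensive.
Import numFieldNormedType.Exports.

(* Write rho_f = W diag(p_i) W^* and rho_0 = Phi diag(p_0) Phi^*, where W = U Psi and
   Psi, Phi are the unitaries whose columns are the eigenbases, and put M = Phi^* W.
   The forward amplitude <phi_b|U psi_a> is M_ba.  The anti-unitary involution Theta acts
   as x |-> T conj(x) with T unitary and T conj(T) = 1; since s |-> T conj(V(tau - s))
   solves the reversed Schroedinger equation and overlaps of two solutions of the same
   Hermitian equation are conserved, the backward propagator is T U^T T^*, so the
   backward amplitude <Theta psi_a|Ut Theta phi_b> is M_ba as well.  Hence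
   p(a,b) = |M_ba|^2 p_i(a) and pt(b,a) = |M_ba|^2 p_0(b), and as the columns of the
   unitary M have unit norm the double sum collapses to
   sum_a p_i(a) ln p_i(a) - sum_a p_i(a) sum_b |M_ba|^2 ln p_0(b)
   = tr(rho_f ln rho_f) - tr(rho_f ln rho_0).  Both sides are +oo exactly when
   p_i(a) > 0, M_ba <> 0 and p_0(b) = 0 for some a, b. *)

Section ComplexCalculus.
Variable R : realType.
Local Notation C := R[i].
Local Notation Re := (@complex.Re R).
Local Notation Im := (@complex.Im R).

Lemma Re_add (z w : C) : Re (z + w) = Re z + Re w. Proof. by case: z; case: w. Qed.

Lemma Im_add (z w : C) : Im (z + w) = Im z + Im w. Proof. by case: z; case: w. Qed.

Lemma Re_mul (z w : C) : Re (z * w) = Re z * Re w - Im z * Im w.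
Proof. by case: z; case: w. Qed.

Lemma Im_mul (z w : C) : Im (z * w) = Re z * Im w + Im z * Re w.
Proof. by case: z => a b; case: w => c d /=; rewrite addrC. Qed.

Definition is_cderive (t : R) (f : R -> C) (d : C) :=
  is_derive t 1 (fun s => Re (f s)) (Re d) /\
  is_derive t 1 (fun s => Im (f s)) (Im d).

Definition ccont_on (tau : R) (f : R -> C) :=
  {within `[0, tau], continuous (fun s => Re (f s))} /\
  {within `[0, tau], continuous (fun s => Im (f s))}.

Lemma is_cderive_cst t (c : C) : is_cderive t (fun=> c) 0.
Proof. by split; exact: is_derive_cst. Qed.

Lemma is_cderiveD t f g df dg : is_cderive t f df -> is_cderive t g dg ->
  is_cderive t (fun s => f s + g s) (df + dg).
Proof.
move=> [f1 f2] [g1 g2]; split.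
- by under eq_fun do rewrite Re_add; rewrite Re_add; exact: is_deriveD.
- by under eq_fun do rewrite Im_add; rewrite Im_add; exact: is_deriveD.
Qed.

Lemma is_cderiveM t f g df dg : is_cderive t f df -> is_cderive t g dg ->
  is_cderive t (fun s => f s * g s) (df * g t + f t * dg).
Proof.
move=> [f1 f2] [g1 g2]; split.
- under eq_fun do rewrite Re_mul.
  apply: (is_derive_eq (is_deriveB (is_deriveM f1 g1) (is_deriveM f2 g2))).
  rewrite /GRing.scale /=; move: (f t) (g t) => x y.
  by case: x y df dg {f1 f2 g1 g2} => [? ?] [? ?] [? ?] [? ?] /=; ring.
- under eq_fun do rewrite Im_mul.
  apply: (is_derive_eq (is_deriveD (is_deriveM f1 g2) (is_deriveM f2 g1))).
  rewrite /GRing.scale /=; move: (f t) (g t) => x y.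
  by case: x y df dg {f1 f2 g1 g2} => [? ?] [? ?] [? ?] [? ?] /=; ring.
Qed.

Lemma Re_conj (z : C) : Re (Num.conj z) = Re z. Proof. by case: z. Qed.

Lemma Im_conj (z : C) : Im (Num.conj z) = - Im z. Proof. by case: z. Qed.

Lemma is_cderive_conj t f df : is_cderive t f df ->
  is_cderive t (fun s => Num.conj (f s)) (Num.conj df).
Proof.
move=> [f1 f2]; split.
- by under eq_fun do rewrite Re_conj; rewrite Re_conj.
- by under eq_fun do rewrite Im_conj; rewrite Im_conj; exact: is_deriveN.
Qed.

Lemma is_cderive_sum t (I : Type) (r : seq I) (F : I -> R -> C) dF :
  (forall i, is_cderive t (F i) (dF i)) ->
  is_cderive t (fun s => \sum_(i <- r) F i s) (\sum_(i <- r) dF i).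
Proof.
move=> dFi; elim: r => [|a r IHr].
  by under eq_fun do rewrite big_nil; rewrite big_nil; exact: is_cderive_cst.
by under eq_fun do rewrite big_cons; rewrite big_cons; exact: is_cderiveD.
Qed.

Lemma is_derive_reflect (tau t d : R) (f : R -> R) :
  is_derive (tau - t) 1 f d -> is_derive t 1 (fun s => f (tau - s)) (- d).
Proof.
move=> fd; rewrite -mulrN1.
apply: (is_derive1_comp (g := fun s => tau - s)) => //.
by rewrite -[-1]sub0r; exact: is_deriveB.
Qed.

Lemma is_cderive_reflect tau t f d : is_cderive (tau - t) f d ->
  is_cderive t (fun s => f (tau - s)) (- d).
Proof. by case=> f1 f2; split; rewrite raddfN; exact: is_derive_reflect. Qed.

Lemma ccont_cst tau (c : C) : ccont_on tau (fun=> c).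
Proof. by split=> x; exact: cvg_cst. Qed.

Lemma ccontD tau f g : ccont_on tau f -> ccont_on tau g ->
  ccont_on tau (fun s => f s + g s).
Proof.
move=> [f1 f2] [g1 g2]; split.
- rewrite (funext (fun s => Re_add (f s) (g s))) => x.
  by apply: cvgD; [exact: f1 | exact: g1].
- rewrite (funext (fun s => Im_add (f s) (g s))) => x.
  by apply: cvgD; [exact: f2 | exact: g2].
Qed.

Lemma ccontM tau f g : ccont_on tau f -> ccont_on tau g ->
  ccont_on tau (fun s => f s * g s).
Proof.
move=> [f1 f2] [g1 g2]; split.
- rewrite (funext (fun s => Re_mul (f s) (g s))) => x.
  by apply: cvgB; apply: cvgM; [exact: f1 | exact: g1 | exact: f2 | exact: g2].
- rewrite (funext (fun s => Im_mul (f s) (g s))) => x.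
  by apply: cvgD; apply: cvgM; [exact: f1 | exact: g2 | exact: f2 | exact: g1].
Qed.

Lemma ccont_conj tau f : ccont_on tau f -> ccont_on tau (fun s => Num.conj (f s)).
Proof.
move=> [f1 f2]; split; first by rewrite (funext (fun s => Re_conj (f s))).
by rewrite (funext (fun s => Im_conj (f s))) => x; apply: cvgN; exact: f2.
Qed.

Lemma ccont_sum tau (I : Type) (r : seq I) (F : I -> R -> C) :
  (forall i, ccont_on tau (F i)) -> ccont_on tau (fun s => \sum_(i <- r) F i s).
Proof.
move=> cF; elim: r => [|a r IHr].
  by under eq_fun do rewrite big_nil; exact: ccont_cst.
by under eq_fun do rewrite big_cons; exact: ccontD.
Qed.

Lemma continuous_within_reflect tau (f : R -> R) :
  {within `[0, tau], continuous f} ->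
  {within `[0, tau], continuous (fun s => f (tau - s))}.
Proof.
have reflA s : s \in `[0, tau]%R -> tau - s \in `[0, tau]%R.
  by rewrite !in_itv /= => /andP[s0 st]; rewrite subr_ge0 st gerBl.
have reflC x : (fun s => tau - s) @ x --> tau - x.
  by apply: cvgB; [exact: cvg_cst | exact: cvg_id].
move=> /subspace_continuousP cf; apply/subspace_continuousP => x Ax.
apply: cvg_comp (cf _ (reflA _ Ax)) => P /= /(reflC x) /=.
rewrite nbhs_simpl /within /=; apply: filterS => s PA As.
exact/PA/reflA.
Qed.

Lemma ccont_reflect tau f : ccont_on tau f -> ccont_on tau (fun s => f (tau - s)).
Proof.
by case=> f1 f2; split; [exact: (continuous_within_reflect f1) |
                             exact: (continuous_within_reflect f2)].
Qed.

Lemma is_cderive0_constant tau f : 0 <= tau -> ccont_on tau f ->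
  (forall t, 0 < t < tau -> is_cderive t f 0) -> f tau = f 0.
Proof.
move=> tau_ge0 [fRe fIm] f'0.
have {}f'0 x : x \in `]0, tau[%R -> is_cderive x f 0 by rewrite in_itv => /f'0.
have [x _] := MVT_segment tau_ge0 (fun x hx => (f'0 x hx).1) fRe.
have [y _] := MVT_segment tau_ge0 (fun x hx => (f'0 x hx).2) fIm.
rewrite !mul0r => /eqP; rewrite subr_eq0 => /eqP eIm /eqP; rewrite subr_eq0 => /eqP eRe.
by apply/eqP; rewrite eq_complex eRe eIm !eqxx.
Qed.

End ComplexCalculus.

Section MatrixCalculus.
Variable R : realType.
Local Notation C := R[i].

Definition is_mxderive {m k} t (F : R -> 'M[C]_(m, k)) (D : 'M[C]_(m, k)) :=
  forall i j, is_cderive t (fun s => F s i j) (D i j).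

Definition mxcont_on {m k} tau (F : R -> 'M[C]_(m, k)) :=
  forall i j, ccont_on tau (fun s => F s i j).

Definition mxconj {m k} (A : 'M[C]_(m, k)) := map_mx Num.conj A.

Lemma is_mxderive_eq m k t (F : R -> 'M[C]_(m, k)) D D' :
  is_mxderive t F D -> D = D' -> is_mxderive t F D'.
Proof. by move=> dF <-. Qed.

Lemma is_mxderive_cst m k t (A : 'M[C]_(m, k)) : is_mxderive t (fun=> A) 0.
Proof. by move=> i j; rewrite mxE; exact: is_cderive_cst. Qed.

Lemma is_mxderiveM m k l t (F : R -> 'M[C]_(m, k)) (G : R -> 'M[C]_(k, l)) D E :
  is_mxderive t F D -> is_mxderive t G E ->
  is_mxderive t (fun s => F s *m G s) (D *m G t + F t *m E).
Proof.
move=> dF dG i j; rewrite !mxE -big_split.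
under eq_fun do rewrite mxE.
by apply: is_cderive_sum => q; exact: is_cderiveM.
Qed.

Lemma is_mxderive_conj m k t (F : R -> 'M[C]_(m, k)) D :
  is_mxderive t F D -> is_mxderive t (fun s => mxconj (F s)) (mxconj D).
Proof.
by move=> dF i j; under eq_fun do rewrite mxE; rewrite mxE; exact: is_cderive_conj.
Qed.

Lemma is_mxderive_adj m k t (F : R -> 'M[C]_(m, k)) D :
  is_mxderive t F D -> is_mxderive t (fun s => qadj (F s)) (qadj D).
Proof.
by move=> dF i j; under eq_fun do rewrite !mxE; rewrite !mxE; exact: is_cderive_conj.
Qed.

Lemma is_mxderive_reflect m k tau t (F : R -> 'M[C]_(m, k)) D :
  is_mxderive (tau - t) F D -> is_mxderive t (fun s => F (tau - s)) (- D).
Proof. by move=> dF i j; rewrite mxE; exact: (is_cderive_reflect (dF i j)). Qed.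

Lemma mxcont_cst m k tau (A : 'M[C]_(m, k)) : mxcont_on tau (fun=> A).
Proof. by move=> i j; exact: ccont_cst. Qed.

Lemma mxcontM m k l tau (F : R -> 'M[C]_(m, k)) (G : R -> 'M[C]_(k, l)) :
  mxcont_on tau F -> mxcont_on tau G -> mxcont_on tau (fun s => F s *m G s).
Proof.
move=> cF cG i j; under eq_fun do rewrite mxE.
by apply: ccont_sum => q; exact: ccontM.
Qed.

Lemma mxcont_conj m k tau (F : R -> 'M[C]_(m, k)) :
  mxcont_on tau F -> mxcont_on tau (fun s => mxconj (F s)).
Proof. by move=> cF i j; under eq_fun do rewrite mxE; exact: ccont_conj. Qed.

Lemma mxcont_adj m k tau (F : R -> 'M[C]_(m, k)) :
  mxcont_on tau F -> mxcont_on tau (fun s => qadj (F s)).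
Proof. by move=> cF i j; under eq_fun do rewrite !mxE; exact: ccont_conj. Qed.

Lemma mxcont_reflect m k tau (F : R -> 'M[C]_(m, k)) :
  mxcont_on tau F -> mxcont_on tau (fun s => F (tau - s)).
Proof. by move=> cF i j; exact: (ccont_reflect (cF i j)). Qed.

Lemma is_mxderive0_constant m k tau (F : R -> 'M[C]_(m, k)) : 0 <= tau ->
  mxcont_on tau F -> (forall t, 0 < t < tau -> is_mxderive t F 0) -> F tau = F 0.
Proof.
move=> tau_ge0 cF dF; apply/matrixP => i j.
apply: is_cderive0_constant tau_ge0 (cF i j) _ => t /dF /(_ i j).
by rewrite mxE.
Qed.

End MatrixCalculus.

Section Adjoint.
Variable R : realType.
Local Notation C := R[i].

Lemma qadjE m k (A : 'M[C]_(m, k)) i j : qadj A i j = Num.conj (A j i).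
Proof. by rewrite !mxE. Qed.

Lemma qadjM m k l (A : 'M[C]_(m, k)) (B : 'M[C]_(k, l)) :
  qadj (A *m B) = qadj B *m qadj A.
Proof. by rewrite /qadj map_mxM trmx_mul. Qed.

Lemma qadjK m k (A : 'M[C]_(m, k)) : qadj (qadj A) = A.
Proof. by apply/matrixP => i j; rewrite !mxE conjCK. Qed.

Lemma qadjZ m k (c : C) (A : 'M[C]_(m, k)) : qadj (c *: A) = Num.conj c *: qadj A.
Proof. by apply/matrixP => i j; rewrite !mxE rmorphM. Qed.

Lemma qadj1 m : qadj (1%:M : 'M[C]_m) = 1%:M.
Proof. by apply/matrixP => i j; rewrite !mxE conjC_nat eq_sym. Qed.

Lemma qadj_mxconj m k (A : 'M[C]_(m, k)) : qadj (mxconj A) = A^T.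
Proof. by apply/matrixP => i j; rewrite !mxE conjCK. Qed.

Lemma mxconjM m k l (A : 'M[C]_(m, k)) (B : 'M[C]_(k, l)) :
  mxconj (A *m B) = mxconj A *m mxconj B.
Proof. exact: map_mxM. Qed.

Lemma mxconjK m k (A : 'M[C]_(m, k)) : mxconj (mxconj A) = A.
Proof. by apply/matrixP => i j; rewrite !mxE conjCK. Qed.

Lemma mxconjZ m k (c : C) (A : 'M[C]_(m, k)) : mxconj (c *: A) = Num.conj c *: mxconj A.
Proof. by apply/matrixP => i j; rewrite !mxE rmorphM. Qed.

Lemma mxconj1 m : mxconj (1%:M : 'M[C]_m) = 1%:M.
Proof. exact: map_mx1. Qed.

Lemma mxconj_delta m k (i : 'I_m) (j : 'I_k) :
  mxconj (delta_mx i j : 'M[C]_(m, k)) = delta_mx i j.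
Proof. by apply/matrixP => a b; rewrite !mxE; case: (_ && _); rewrite ?conjC1 ?conjC0. Qed.

Lemma qadj_delta m k (i : 'I_m) (j : 'I_k) :
  qadj (delta_mx i j : 'M[C]_(m, k)) = delta_mx j i.
Proof. by rewrite /qadj -/(mxconj _) mxconj_delta trmx_delta. Qed.

Lemma qadj_delta_mul m k (A : 'M[C]_(m, k)) i j :
  (qadj (delta_mx i 0 : 'cV[C]_m) *m A *m (delta_mx j 0 : 'cV[C]_k)) 0 0 = A i j.
Proof. by rewrite qadj_delta -(rowE i A) -(colE j (row i A)) !mxE. Qed.

End Adjoint.

Section AntiUnitary.
Variables (R : realType) (n : nat) (Theta : 'cV[R[i]]_n -> 'cV[R[i]]_n).
Local Notation C := R[i].
Hypothesis Theta_anti : qantiunitary Theta.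

Definition antiunitary_mx : 'M[C]_n := \matrix_(k, j) (Theta (delta_mx j 0)) k 0.
Local Notation T := antiunitary_mx.

Lemma antiunitary_mxE x : Theta x = T *m mxconj x.
Proof.
case: Theta_anti => ThetaD ThetaZ _.
have Theta0 : Theta 0 = 0 by rewrite -[0 in LHS](scale0r 0) ThetaZ conjC0 scale0r.
have xE : x = \sum_(j < n) x j 0 *: delta_mx j 0.
  by rewrite {1}[x]matrix_sum_delta; apply: eq_bigr => j _; rewrite big_ord1.
rewrite {1}xE (big_morph Theta ThetaD Theta0); apply/matrixP => i k.
rewrite !ord1 summxE mxE; apply: eq_bigr => j _.
by rewrite ThetaZ !mxE mulrC.
Qed.

Lemma antiunitary_mx_unitary : qadj T *m T = 1%:M.
Proof.
case: Theta_anti => _ _ ThetaI; apply/matrixP => i j.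
have delta_ij := qadj_delta_mul (1%:M : 'M[C]_n) i j; rewrite mulmx1 in delta_ij.
have := ThetaI (delta_mx i 0) (delta_mx j 0).
rewrite !antiunitary_mxE !mxconj_delta /qinner qadjM -mulmxA (mulmxA (qadj T)).
by rewrite mulmxA qadj_delta_mul delta_ij => ->; rewrite !mxE conjC_nat.
Qed.

Hypothesis Theta_invol : involutive Theta.

Lemma antiunitary_mx_conj : T *m mxconj T = 1%:M.
Proof.
apply/matrixP => i j.
have := congr1 (fun v : 'cV[C]_n => v i 0) (Theta_invol (delta_mx j 0)).
by rewrite !antiunitary_mxE mxconjM mxconjK mulmxA -colE !mxE andbT.
Qed.

Lemma qadj_antiunitary_mx : qadj T = mxconj T.
Proof.
by rewrite -[qadj T]mulmx1 -antiunitary_mx_conj mulmxA antiunitary_mx_unitary mul1mx.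
Qed.

Lemma qsandwichE (A : 'M[C]_n) : qsandwich Theta A = T *m mxconj A *m mxconj T.
Proof.
apply/matrixP => i j.
by rewrite mxE !antiunitary_mxE !mxconjM mxconjK !mulmxA -colE mxE.
Qed.

End AntiUnitary.

Section Schrodinger.
Variable R : realType.
Local Notation C := R[i].

Definition solves_schrodinger {n m} (G : R -> 'M[C]_n) tau (V : R -> 'M[C]_(n, m)) :=
  mxcont_on tau V /\
  forall t, 0 < t < tau -> is_mxderive t V (- 'i *: (G t *m V t)).

Lemma qis_texp_solves n (G : R -> 'M[C]_n) tau U : qis_texp G tau U ->
  exists2 V, V 0 = 1%:M /\ V tau = U & solves_schrodinger G tau V.
Proof. by case=> V [V0 VU cV dV]; exists V. Qed.

Lemma schrodinger_overlap_constant n m k (G : R -> 'M[C]_n) tau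
    (X : R -> 'M[C]_(n, m)) (Y : R -> 'M[C]_(n, k)) :
  0 <= tau -> (forall t, qhermitian (G t)) ->
  solves_schrodinger G tau X -> solves_schrodinger G tau Y ->
  qadj (X tau) *m Y tau = qadj (X 0) *m Y 0.
Proof.
move=> tau_ge0 hG [cX dX] [cY dY].
apply: is_mxderive0_constant tau_ge0 (mxcontM (mxcont_adj cX) cY) _ => t t_in.
apply: is_mxderive_eq (is_mxderiveM (is_mxderive_adj (dX t t_in)) (dY t t_in)) _.
rewrite qadjZ qadjM hG -scalemxAl -scalemxAr mulmxA.
by rewrite rmorphN /= conjCi opprK scaleNr addrN.
Qed.

Lemma qis_texp_unitary n (G : R -> 'M[C]_n) tau U : 0 <= tau ->
  (forall t, qhermitian (G t)) -> qis_texp G tau U -> qadj U *m U = 1%:M.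
Proof.
move=> tau_ge0 hG /qis_texp_solves [V [V0 VU] sV].
by rewrite -VU (schrodinger_overlap_constant tau_ge0 hG sV sV) V0 qadj1 mulmx1.
Qed.

End Schrodinger.

Section TimeReversal.
Variables (R : realType) (n : nat) (Theta : 'cV[R[i]]_n -> 'cV[R[i]]_n).
Local Notation C := R[i].
Hypotheses (Theta_anti : qantiunitary Theta) (Theta_invol : involutive Theta).
Local Notation T := (antiunitary_mx Theta).

Lemma qhermitian_qsandwich (A : 'M[C]_n) :
  qhermitian A -> qhermitian (qsandwich Theta A).
Proof.
move=> hA; have TT : T^T = T by rewrite -qadj_mxconj -qadj_antiunitary_mx // qadjK.
have AT : A^T = mxconj A by rewrite -[in LHS]hA /qadj trmxK.
rewrite /qhermitian qsandwichE // !qadjM !qadj_mxconj.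
by rewrite qadj_antiunitary_mx // TT AT mulmxA.
Qed.

Lemma solves_schrodinger_reversed m (G : R -> 'M[C]_n) tau (V : R -> 'M[C]_(n, m)) :
  solves_schrodinger G tau V ->
  solves_schrodinger (fun s => qsandwich Theta (G (tau - s))) tau
                     (fun s => T *m mxconj (V (tau - s))).
Proof.
case=> cV dV; split.
  exact: mxcontM (mxcont_cst _ _) (mxcont_conj (mxcont_reflect cV)).
move=> t /andP[t_gt0 t_lt]; have tt_in : 0 < tau - t < tau by rewrite subr_gt0 t_lt gtrBl.
have dVr := is_mxderive_conj (is_mxderive_reflect (dV _ tt_in)).
apply: is_mxderive_eq; first exact: is_mxderiveM (is_mxderive_cst _ _) dVr.
have TcT : mxconj T *m T = 1%:M by apply: mulmx1C; exact: antiunitary_mx_conj.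
rewrite mul0mx add0r qsandwichE // -!mulmxA (mulmxA (mxconj T)) TcT mul1mx.
by rewrite scaleNr opprK mxconjZ mxconjM conjCi [RHS]scalemxAr.
Qed.

(* The overlap of s |-> T conj(V (tau - s)) with the reversed propagator is conserved;
   comparing s = 0 with s = tau gives T^* Ut = (T conj(U))^*. *)
Lemma qis_texp_time_reversal (H : R -> 'M[C]_n) tau U Ut :
  0 <= tau -> (forall t, qhermitian (H t)) -> qis_texp H tau U ->
  qis_texp (fun t => qsandwich Theta (H (tau - t))) tau Ut ->
  Ut = T *m U^T *m qadj T.
Proof.
move=> tau_ge0 hH /qis_texp_solves [V [V0 VU] sV] /qis_texp_solves [W [W0 WUt] sW].
have hHr t : qhermitian (qsandwich Theta (H (tau - t))) by exact: qhermitian_qsandwich.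
have := schrodinger_overlap_constant tau_ge0 hHr (solves_schrodinger_reversed sV) sW.
rewrite subrr subr0 V0 VU W0 WUt mxconj1 !mulmx1 => TUt.
have TTadj : T *m qadj T = 1%:M by apply: mulmx1C; exact: antiunitary_mx_unitary.
by rewrite -[Ut]mul1mx -TTadj -mulmxA TUt qadjM qadj_mxconj mulmxA.
Qed.

Lemma qinner_time_reversal (H : R -> 'M[C]_n) tau U Ut x y :
  0 <= tau -> (forall t, qhermitian (H t)) -> qis_texp H tau U ->
  qis_texp (fun t => qsandwich Theta (H (tau - t))) tau Ut ->
  qinner (Theta x) (Ut *m Theta y) = qinner y (U *m x).
Proof.
move=> tau_ge0 hH hU hUt; rewrite (qis_texp_time_reversal tau_ge0 hH hU hUt).
have TadjT : qadj T *m T = 1%:M by exact: antiunitary_mx_unitary.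
rewrite !(antiunitary_mxE Theta_anti) /qinner qadjM qadj_mxconj !mulmxA.
rewrite -(mulmxA _ (qadj T)) TadjT mulmx1 -(mulmxA _ (qadj T)) TadjT mulmx1.
have -> : qadj y *m U *m x = (x^T *m U^T *m mxconj y)^T.
  by rewrite !trmx_mul !trmxK mulmxA.
by rewrite [RHS]mxE.
Qed.

End TimeReversal.

Section SpectralCalculus.
Variables (R : realType) (n : nat).
Local Notation C := R[i].

Definition basis_mx (v : 'I_n -> 'cV[C]_n) : 'M[C]_n := \matrix_(i, a) v a i 0.

Lemma basis_mx_delta v a : basis_mx v *m delta_mx a 0 = v a.
Proof. by rewrite -colE; apply/matrixP => i j; rewrite !mxE ord1. Qed.

Lemma basis_mx_unitary v : qorthonormal v -> qadj (basis_mx v) *m basis_mx v = 1%:M.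
Proof.
move=> v_on; apply/matrixP => a b.
rewrite -qadj_delta_mul -mulmxA !mulmxA -qadjM -mulmxA !basis_mx_delta.
by rewrite -/(qinner (v a) (v b)) v_on !mxE.
Qed.

Definition rdiag_mx (d : 'I_n -> R) : 'M[C]_n := diag_mx (\row_a (d a)%:C).

Lemma qadj_rdiag_mx d : qadj (rdiag_mx d) = rdiag_mx d.
Proof.
apply/matrixP => i j; rewrite !mxE eq_sym.
case: eqP => [->|_]; rewrite ?mulr1n ?mulr0n ?conjC0 //.
by apply/eqP; rewrite eq_complex /= oppr0 !eqxx.
Qed.

Lemma rdiag_mxM d e : rdiag_mx d *m rdiag_mx e = rdiag_mx (fun a => d a * e a).
Proof.
by rewrite mulmx_diag; congr diag_mx; apply/matrixP => i j; rewrite !mxE rmorphM.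
Qed.

Lemma qdensE p v : qdens p v = basis_mx v *m rdiag_mx p *m qadj (basis_mx v).
Proof.
apply/matrixP => i j; rewrite /qdens summxE mul_mx_diag !mxE.
apply: eq_bigr => a _; rewrite !mxE big_ord1 !mxE.
by rewrite mulrA [(p a)%:C * _]mulrC.
Qed.

Lemma diag_mx_intertwine (a b : 'rV[C]_n) (Q : 'M[C]_n) (f : C -> C) :
  diag_mx a *m Q = Q *m diag_mx b ->
  diag_mx (map_mx f a) *m Q = Q *m diag_mx (map_mx f b).
Proof.
move=> /matrixP abQ; apply/matrixP => i j; have := abQ i j.
rewrite !mul_diag_mx !mul_mx_diag !mxE.
have [->|Qij] := eqVneq (Q i j) 0; first by rewrite !mulr0 !mul0r.
move=> abQij; have -> : a 0 i = b 0 j by apply: (mulIf Qij); rewrite abQij mulrC.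
by rewrite mulrC.
Qed.

Lemma qmxlog_unitary_conj (W : 'M[C]_n) d : qadj W *m W = 1%:M ->
  qmxlog (W *m rdiag_mx d *m qadj W) = W *m rdiag_mx (fun a => qlnz (d a)) *m qadj W.
Proof.
move=> WW; set A := W *m rdiag_mx d *m qadj W.
have An : A \is normalmx.
  apply/normalmxP; rewrite /A -map_trmx -/(qadj _) !qadjM qadjK qadj_rdiag_mx.
  by rewrite mulmxA.
have := orthomx_spectralP An; rewrite /qmxlog -/A.
set P := spectralmx A; set sp := spectral_diag A.
rewrite invmx_unitary ?spectral_unitarymx // -map_trmx -/(qadj P) => Adiag.
have PP : P *m qadj P = 1%:M by rewrite /qadj map_trmx; apply/unitarymxP/spectral_unitarymx.
have PW : diag_mx sp *m (P *m W) = (P *m W) *m rdiag_mx d.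
  transitivity (P *m A *m W); first by rewrite Adiag !mulmxA PP mul1mx.
  by rewrite /A !mulmxA -(mulmxA _ (qadj W)) WW mulmx1.
set lnC := fun z : C => (qlnz (complex.Re z))%:C.
have -> : rdiag_mx (fun a => qlnz (d a)) = diag_mx (map_mx lnC (\row_a (d a)%:C)).
  by apply/matrixP => i j; rewrite !mxE.
transitivity (qadj P *m (diag_mx (map_mx lnC sp) *m (P *m W)) *m qadj W).
  by rewrite !mulmxA -(mulmxA _ W) (mulmx1C WW) mulmx1.
by rewrite (diag_mx_intertwine _ PW) !mulmxA (mulmx1C PP) mul1mx.
Qed.

End SpectralCalculus.

Section QuadraticForms.
Variables (R : realType) (n : nat).
Local Notation C := R[i].

Lemma qabs2E (z : C) : (qabs2 z)%:C = Num.conj z * z.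
Proof.
case: z => a b; apply/eqP; rewrite eq_complex /= /qabs2 /=.
by apply/andP; split; apply/eqP; ring.
Qed.

Lemma qabs2_ge0 (z : C) : 0 <= qabs2 z.
Proof. by rewrite /qabs2 addr_ge0 // sqr_ge0. Qed.

Lemma qabs2_eq0 (z : C) : (qabs2 z == 0) = (z == 0).
Proof. by rewrite -(inj_eq (@complexI R)) qabs2E mulf_eq0 conjC_eq0 orbb. Qed.

Lemma qabs2_conj (z : C) : qabs2 (Num.conj z) = qabs2 z.
Proof. by apply: (@complexI R); rewrite !qabs2E conjCK mulrC. Qed.

Lemma qform_rdiag_mx (z : 'cV[C]_n) d :
  (qadj z *m rdiag_mx d *m z) 0 0 = (\sum_a d a * qabs2 (z a 0))%:C.
Proof.
rewrite mxE rmorph_sum; apply: eq_bigr => a _.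
by rewrite mul_mx_diag !mxE rmorphM /= qabs2E mulrAC mulrC.
Qed.

Lemma qform_rdiag_mx_col (M : 'M[C]_n) d a :
  (qadj M *m rdiag_mx d *m M) a a = (\sum_b d b * qabs2 (M b a))%:C.
Proof.
rewrite -(qadj_delta_mul (qadj M *m rdiag_mx d *m M) a a) -!mulmxA !mulmxA -qadjM.
rewrite -mulmxA qform_rdiag_mx.
by under eq_bigr do rewrite -colE mxE.
Qed.

Lemma unitary_col_qabs2 (M : 'M[C]_n) a : qadj M *m M = 1%:M -> \sum_b qabs2 (M b a) = 1.
Proof.
move=> MU; apply: (@complexI R); rewrite rmorph_sum /=.
transitivity ((qadj M *m M) a a); last by rewrite MU mxE eqxx.
by rewrite mxE; apply: eq_bigr => b _; rewrite qabs2E !mxE.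
Qed.

Lemma mxtrace_rdiag_mx (d : 'I_n -> R) : \tr (rdiag_mx d) = (\sum_a d a)%:C.
Proof. by rewrite mxtrace_diag rmorph_sum; apply: eq_bigr => a _; rewrite mxE. Qed.

Lemma mxtrace_rdiag_mxM (d : 'I_n -> R) (X : 'M[C]_n) :
  \tr (rdiag_mx d *m X) = \sum_a (d a)%:C * X a a.
Proof. by rewrite mul_diag_mx; apply: eq_bigr => a _; rewrite !mxE. Qed.

Lemma mxtrace_unitary_conj (W X : 'M[C]_n) : qadj W *m W = 1%:M ->
  \tr (W *m X *m qadj W) = \tr X.
Proof. by move=> WW; rewrite mxtrace_mulC mulmxA WW mul1mx. Qed.

End QuadraticForms.

Lemma sum_neq0_witness (V : nmodType) (I : finType) (F : I -> V) :
  \sum_i F i != 0 -> exists i, F i != 0.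
Proof.
case: (pickP (fun i => F i != 0)) => [i Fi _|F0]; first by exists i.
by rewrite big1 ?eqxx // => i _; apply/eqP/negbFE/F0.
Qed.

Lemma qklterm_neqNy (R : realType) (x y : R) : qklterm x y != -oo%E.
Proof. by rewrite /qklterm; case: ifP => _ //; case: ifP. Qed.

Section DiagonalRelativeEntropy.
Variables (R : realType) (n : nat) (W V : 'M[R[i]]_n) (pi p0 : 'I_n -> R).
Local Notation C := R[i].
Hypotheses (W_unitary : qadj W *m W = 1%:M) (V_unitary : qadj V *m V = 1%:M).
Hypotheses (pi_ge0 : forall a, 0 <= pi a) (p0_ge0 : forall b, 0 <= p0 b).
Local Notation rho := (W *m rdiag_mx pi *m qadj W).
Local Notation sigma := (V *m rdiag_mx p0 *m qadj V).
Local Notation M := (qadj V *m W).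

Lemma overlap_unitary : qadj M *m M = 1%:M.
Proof. by rewrite qadjM qadjK mulmxA -(mulmxA _ V) (mulmx1C V_unitary) mulmx1. Qed.

Lemma mxtrace_entropy : complex.Re (\tr (rho *m qmxlog rho)) = \sum_a pi a * qlnz (pi a).
Proof.
rewrite qmxlog_unitary_conj // !mulmxA -(mulmxA _ (qadj W) W) W_unitary mulmx1.
by rewrite -(mulmxA W) rdiag_mxM mxtrace_unitary_conj // mxtrace_rdiag_mx.
Qed.

Lemma mxtrace_cross_entropy : complex.Re (\tr (rho *m qmxlog sigma)) =
  \sum_a pi a * \sum_b qabs2 (M b a) * qlnz (p0 b).
Proof.
rewrite qmxlog_unitary_conj // -!mulmxA mxtrace_mulC !mulmxA.
rewrite [X in \tr X](_ : _ = rdiag_mx pi *m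
  (qadj M *m rdiag_mx (fun b => qlnz (p0 b)) *m M)); last by rewrite qadjM qadjK !mulmxA.
rewrite mxtrace_rdiag_mxM raddf_sum; apply: eq_bigr => a _.
rewrite qform_rdiag_mx_col -rmorphM /=.
by congr (_ * _); apply: eq_bigr => b _; rewrite mulrC.
Qed.

Lemma qinner_rho y : qinner y (rho *m y) = (\sum_a pi a * qabs2 ((qadj W *m y) a 0))%:C.
Proof. by rewrite /qinner -qform_rdiag_mx qadjM qadjK !mulmxA. Qed.

Lemma relent_kernelP :
  (exists y : 'cV[C]_n, sigma *m y = 0 /\ qinner y (rho *m y) != 0) <->
  exists a b, [/\ pi a != 0, M b a != 0 & p0 b = 0].
Proof.
split=> [[y [sigma_y rho_y]] | [a [b [pia Mba p0b]]]].
- set c := qadj V *m y.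
  have p0c b : (p0 b)%:C * c b 0 = 0.
    have := congr1 (mulmx (qadj V)) sigma_y.
    rewrite mulmx0 !mulmxA V_unitary mul1mx -mulmxA => /matrixP/(_ b 0).
    by rewrite mul_diag_mx !mxE.
  have Wy : qadj W *m y = qadj M *m c.
    by rewrite /c qadjM qadjK mulmxA -(mulmxA _ V) (mulmx1C V_unitary) mulmx1.
  move: rho_y; rewrite qinner_rho (inj_eq (@complexI R)) => /eqP.
  case/psumr_neq0P => [a _ | a]; first by rewrite mulr_ge0 ?qabs2_ge0.
  move=> /andP[_ /lt0r_neq0]; rewrite mulf_eq0 negb_or qabs2_eq0 Wy => /andP[pia].
  rewrite mxE => /sum_neq0_witness [b]; rewrite mulf_eq0 negb_or qadjE conjC_eq0.
  move=> /andP[Mba cb]; exists a, b; split=> //.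
  by move/eqP: (p0c b); rewrite mulf_eq0 (negbTE cb) orbF => /eqP /(@complexI R).
- exists (V *m delta_mx b 0); split.
    rewrite -!mulmxA (mulmxA (qadj V)) V_unitary mul1mx.
    suff -> : rdiag_mx p0 *m (delta_mx b 0 : 'cV[C]_n) = 0 by rewrite mulmx0.
    apply/matrixP => i j; rewrite mul_diag_mx !mxE.
    by case: (i =P b) => [->|_]; rewrite ?p0b ?mul0r ?andFb ?mulr0.
  rewrite qinner_rho mulmxA (_ : qadj W *m V = qadj M); last by rewrite qadjM qadjK.
  rewrite (inj_eq (@complexI R)) psumr_neq0 => [|a' _].
    apply/hasP; exists a; rewrite ?mem_index_enum //=.
    rewrite -colE mxE qadjE qabs2_conj mulr_gt0 // lt0r ?pi_ge0 ?qabs2_ge0 ?andbT //.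
    by rewrite qabs2_eq0.
  by rewrite mulr_ge0 ?qabs2_ge0.
Qed.

Lemma sum_qklterm_pinfty : (exists a b, [/\ pi a != 0, M b a != 0 & p0 b = 0]) ->
  (\sum_a \sum_b qklterm (qabs2 (M b a) * pi a) (qabs2 (M b a) * p0 b))%E = +oo%E.
Proof.
case=> a [b [pia Mba p0b]]; apply/esum_eqyP => [a' _ | ].
  by apply/eqP => /esum_eqNyP [b' [_ _ /eqP]]; rewrite (negbTE (qklterm_neqNy _ _)).
exists a; split=> //.
apply/esum_eqyP => [b' _ | ]; first exact: qklterm_neqNy.
exists b; split=> //.
rewrite /qklterm p0b mulr0 eqxx ifF //; apply/negbTE.
by rewrite mulf_neq0 // qabs2_eq0.
Qed.

Lemma qklterm_finite a b : (pi a != 0 -> M b a != 0 -> p0 b != 0) ->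
  qklterm (qabs2 (M b a) * pi a) (qabs2 (M b a) * p0 b) =
  (qabs2 (M b a) * pi a * (qlnz (pi a) - qlnz (p0 b)))%:E.
Proof.
move=> supp; rewrite /qklterm.
have [->|] := eqVneq (qabs2 (M b a) * pi a) 0; first by rewrite mul0r.
rewrite mulf_eq0 negb_or qabs2_eq0 => /andP[Mba pia].
have p0b := supp pia Mba; rewrite ifF; last by apply/negbTE; rewrite mulf_neq0 ?qabs2_eq0.
have pia_gt0 : 0 < pi a by rewrite lt0r pia pi_ge0.
have p0b_gt0 : 0 < p0 b by rewrite lt0r p0b p0_ge0.
by rewrite -mulf_div divff ?qabs2_eq0 // mul1r ln_div ?posrE // /qlnz pia_gt0 p0b_gt0.
Qed.

Lemma qrelent_unitary_rdiag : qrelent rho sigma =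
  (\sum_a \sum_b qklterm (qabs2 (M b a) * pi a) (qabs2 (M b a) * p0 b))%E.
Proof.
rewrite /qrelent; case: ifPn => [/asboolP/relent_kernelP/sum_qklterm_pinfty -> //|].
move=> /asboolP no_kernel.
have supp a b : pi a != 0 -> M b a != 0 -> p0 b != 0.
  by move=> pia Mba; apply/eqP => p0b; apply: no_kernel; apply/relent_kernelP; exists a, b.
rewrite (eq_bigr (fun a => (\sum_b qabs2 (M b a) * pi a * (qlnz (pi a) - qlnz (p0 b)))%:E)).
  rewrite sumEFin mxtrace_entropy mxtrace_cross_entropy -sumrB; congr EFin.
  apply: eq_bigr => a _; rewrite -[pi a * qlnz (pi a)]mul1r.
  rewrite -(unitary_col_qabs2 a overlap_unitary) mulr_suml mulr_sumr -sumrB.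
  by apply: eq_bigr => b _; ring.
by move=> a _; rewrite -sumEFin; apply: eq_bigr => b _; exact: qklterm_finite (supp a b).
Qed.

End DiagonalRelativeEntropy.

Theorem theorem5p3 (R : realType) (n : nat)
  (pi p0 : 'I_n -> R) (psi phi : 'I_n -> 'cV[R[i]]_n)
  (H : R -> 'M[R[i]]_n) (tau : R) (U Ut : 'M[R[i]]_n)
  (Theta : 'cV[R[i]]_n -> 'cV[R[i]]_n) :
  qprob_vec pi -> qorthonormal psi ->
  qprob_vec p0 -> qorthonormal phi ->
  0 <= tau ->
  (forall t, qhermitian (H t)) -> qmx_cont_on tau H ->
  qis_texp H tau U ->
  qantiunitary Theta -> (forall x, Theta (Theta x) = x) ->
  qis_texp (fun t => qsandwich Theta (H (tau - t))) tau Ut ->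
  let rho_i := qdens pi psi in
  let rho_0 := qdens p0 phi in
  let rho_f := U *m rho_i *m qadj U in
  let p := fun a b => qabs2 (qinner (phi b) (U *m psi a)) * pi a in
  let pt := fun b a =>
    qabs2 (qinner (Theta (psi a)) (Ut *m Theta (phi b))) * p0 b in
  (\sum_(a < n) \sum_(b < n) qklterm (p a b) (pt b a))%E = qrelent rho_f rho_0.
Proof.
move=> [pi_ge0 _] psi_on [p0_ge0 _] phi_on tau_ge0 hH _ hU Theta_anti Theta_invol hUt.
move=> rho_i rho_0 rho_f p pt.
set W := U *m basis_mx psi; set M := qadj (basis_mx phi) *m W.
have W_unitary : qadj W *m W = 1%:M.
  rewrite qadjM mulmxA -(mulmxA _ (qadj U)) (qis_texp_unitary tau_ge0 hH hU) mulmx1.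
  exact: basis_mx_unitary.
have amp a b : qinner (phi b) (U *m psi a) = M b a.
  rewrite -qadj_delta_mul -(basis_mx_delta psi a) -(basis_mx_delta phi b).
  by rewrite /qinner qadjM !mulmxA.
have ampt a b : qinner (Theta (psi a)) (Ut *m Theta (phi b)) = M b a.
  by rewrite (qinner_time_reversal Theta_anti Theta_invol _ _ tau_ge0 hH hU hUt).
have -> : rho_f = W *m rdiag_mx pi *m qadj W by rewrite /rho_f /rho_i qdensE qadjM !mulmxA.
rewrite /rho_0 qdensE qrelent_unitary_rdiag ?basis_mx_unitary //.
by apply: eq_bigr => a _; apply: eq_bigr => b _; rewrite /p /pt amp ampt.
Qed.
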